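(* Fix an integer $g \ge 0$. For any $0 < c_1 < 1$ and $c_2 > 1$ we have $$p^{c_1/p} < r_{(g,p)} < p^{c_2/p} \quad \text{for all sufficiently large } p.$$ In particular $\displaystyle\lim_{p \to \infty} \frac{p \log r_{(g,p)}}{\log p} = 1$.
   Context: For nonnegative integers $g,p$ let $$B_{(g,p)}(t) = t^{2p+1}(t^{2g+1}-1) + 1 - 2t^{p+g+1} - t^{2g+1},$$ and let $r_{(g,p)}$ be the unique real root of $B_{(g,p)}(t)$ greater than $1$. *)

From Stdlib Require Import Reals ClassicalEpsilon.
From Coquelicot Require Import Coquelicot.
Open Scope R_scope.

Definition B (g p : nat) (t : R) : R :=
  t ^ (2 * p + 1) * (t ^ (2 * g + 1) - 1) + 1
  - 2 * t ^ (p + g + 1) - t ^ (2 * g + 1).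

Definition r (g p : nat) : R :=
  epsilon (inhabits 0) (fun t => 1 < t /\ B g p t = 0).

(* With u = t^p and w = t^(2g+1), B(t) is negative while u (w - 1) <= 2 and
   positive once u (t - 1) > 3, so the root r lies between the two thresholds.
   At t = p^(c/p) one has u = p^c and t^k - 1 ~ k c (ln p) / p, so both
   threshold quantities behave like p^(c-1) ln p: they tend to 0 for c < 1 and
   to infinity for c > 1.  Taking logarithms of the two-sided bound gives the
   limit. *)

From Stdlib Require Import Reals Lra Lia ClassicalEpsilon.
From Coquelicot Require Import Coquelicot.
Open Scope R_scope.

Lemma B_expand g p t :
  B g p t = t * t ^ p * t ^ p * (t ^ g * t ^ g * t - 1) + 1
            - 2 * t ^ p * t ^ g * t - t ^ g * t ^ g * t.
Proof.
  unfold B.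
  replace (2 * p + 1)%nat with (p + p + 1)%nat by lia.
  replace (2 * g + 1)%nat with (g + g + 1)%nat by lia.
  rewrite !pow_add; ring.
Qed.

Lemma pow_odd_double t g : t ^ (2 * g + 1) = t ^ g * t ^ g * t.
Proof. replace (2 * g + 1)%nat with (g + g + 1)%nat by lia. rewrite !pow_add; ring. Qed.

Lemma B_neg g p t :
  1 < t -> t ^ p * (t ^ (2 * g + 1) - 1) <= 2 -> B g p t < 0.
Proof.
  intros Ht Hsmall; rewrite B_expand; rewrite pow_odd_double in Hsmall.
  assert (Hu : 1 <= t ^ p) by (apply pow_R1_Rle; lra).
  assert (Hv : 1 <= t ^ g) by (apply pow_R1_Rle; lra).
  set (u := t ^ p) in *; set (v := t ^ g) in *.
  (* with w = v v t: t u^2 (w - 1) <= 2 t u, hence B <= 2 t u (1 - v) + (1 - w) *)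
  assert (Hlead : 0 <= t * u * (2 - u * (v * v * t - 1)))
    by (apply Rmult_le_pos; nra).
  assert (Hvv : 1 <= v * v) by nra.
  assert (Hw : 1 < v * v * t) by nra.
  assert (0 <= t * u * (v - 1)) by (apply Rmult_le_pos; nra).
  nra.
Qed.

Lemma B_pos g p t : 1 < t -> 3 < t ^ p * (t - 1) -> 0 < B g p t.
Proof.
  intros Ht Hlarge; rewrite B_expand.
  assert (Hu : 1 <= t ^ p) by (apply pow_R1_Rle; lra).
  assert (Hv : 1 <= t ^ g) by (apply pow_R1_Rle; lra).
  set (u := t ^ p) in *; set (v := t ^ g) in *; set (w := v * v * t).
  assert (Hvt : v * t <= w).
  { assert (0 <= v * t * (v - 1)) by (apply Rmult_le_pos; nra). unfold w; lra. }
  assert (Htw : t <= w) by nra.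
  (* t (w - 1) >= w (t - 1), hence t u^2 (w - 1) > 3 u w >= 2 u v t + w *)
  assert (Hlead : u * u * (w * (t - 1)) <= u * u * (t * (w - 1)))
    by (apply Rmult_le_compat_l; nra).
  assert (Hwu : u * w * 3 < u * w * (u * (t - 1)))
    by (apply Rmult_lt_compat_l; nra).
  assert (0 <= u * (w - v * t)) by (apply Rmult_le_pos; lra).
  assert (0 <= w * (u - 1)) by (apply Rmult_le_pos; lra).
  lra.
Qed.

Lemma B_at_1 g p : B g p 1 = -2.
Proof. unfold B; rewrite !pow1; ring. Qed.

Lemma B_continuous g p : continuity (B g p).
Proof. unfold B; reg. Qed.

Lemma r_root g p t : 1 < t -> 0 < B g p t -> 1 < r g p /\ B g p (r g p) = 0.
Proof.
  intros Ht HBt; unfold r; apply epsilon_spec.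
  destruct (IVT (B g p) 1 t (B_continuous g p) Ht) as [z [[Hz1 _] Hz]];
    [rewrite B_at_1; lra | exact HBt |].
  exists z; split; [| exact Hz].
  destruct Hz1 as [Hz1 | <-]; [exact Hz1 | rewrite B_at_1 in Hz; lra].
Qed.

Lemma B_root_gt g p t x :
  1 < t -> t ^ p * (t ^ (2 * g + 1) - 1) <= 2 -> 1 < x -> B g p x = 0 -> t < x.
Proof.
  intros Ht Hsmall Hx Hroot.
  destruct (Rlt_le_dec t x) as [Htx | Hxt]; [exact Htx | exfalso].
  assert (B g p x < 0); [| lra].
  apply B_neg; [exact Hx |].
  apply Rle_trans with (t ^ p * (t ^ (2 * g + 1) - 1)); [| exact Hsmall].
  assert (1 <= x ^ (2 * g + 1)) by (apply pow_R1_Rle; lra).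
  apply Rmult_le_compat;
    [apply pow_le; lra | lra | apply pow_incr; lra |].
  assert (x ^ (2 * g + 1) <= t ^ (2 * g + 1)) by (apply pow_incr; lra); lra.
Qed.

Lemma B_root_lt g p t x :
  1 < t -> 3 < t ^ p * (t - 1) -> 1 < x -> B g p x = 0 -> x < t.
Proof.
  intros Ht Hlarge Hx Hroot.
  destruct (Rlt_le_dec x t) as [Hxt | Htx]; [exact Hxt | exfalso].
  assert (0 < B g p x); [| lra].
  apply B_pos; [exact Hx |].
  apply Rlt_le_trans with (t ^ p * (t - 1)); [exact Hlarge |].
  apply Rmult_le_compat; [apply pow_le; lra | lra | apply pow_incr; lra | lra].
Qed.

Lemma sqr_div4_lt_exp x : 0 <= x -> x * x / 4 < exp x.
Proof.
  intros Hx; replace x with (x / 2 + x / 2) at 3 by field; rewrite exp_plus.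
  pose proof (exp_ineq1_le (x / 2)); nra.
Qed.

Lemma exp_sub1_le_3mul y : 0 <= y <= 1 -> exp y - 1 <= 3 * y.
Proof.
  intros Hy.
  (* exp (-y) >= 1 - y gives exp y - 1 <= y exp y, and exp y <= e <= 3 *)
  pose proof (exp_ineq1_le (- y)) as Hconv.
  assert (Hinv : exp (- y) * exp y = 1)
    by (rewrite <- exp_plus, Rplus_opp_l; apply exp_0).
  assert (He : exp y <= 3).
  { apply Rle_trans with (exp 1); [| exact exp_le_3].
    destruct (Req_dec y 1) as [-> | Hy1]; [lra | left; apply exp_increasing; lra]. }
  pose proof (exp_pos y); nra.
Qed.

Lemma eventually_of_ln (P : R -> Prop) (S : R) :
  (forall x, 0 < x -> S <= ln x -> P x) ->
  exists X, forall x, X <= x -> P x.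
Proof.
  intros HP; exists (exp S); intros x Hx.
  pose proof (exp_pos S).
  apply HP; [lra |].
  rewrite <- (ln_exp S) at 1.
  destruct (Rle_lt_or_eq _ _ Hx) as [Hlt | <-];
    [left; apply ln_increasing; lra | right; reflexivity].
Qed.

Lemma eventually_Rpower_div_sub1_gt c : 1 < c ->
  exists X, forall x, X <= x -> 3 < Rpower x c * (Rpower x (c / x) - 1).
Proof.
  intros Hc; apply (eventually_of_ln _ (1 + 3 / (c * (c - 1)))).
  intros x Hx Hs; unfold Rpower; set (s := ln x) in *.
  assert (0 <= 3 / (c * (c - 1)))
    by (apply Rmult_le_pos; [lra | left; apply Rinv_0_lt_compat; nra]).
  assert (Hxs : x = exp s) by (symmetry; apply exp_ln, Hx).
  assert (Hbig : 3 < c * (c - 1) * s).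
  { apply Rle_lt_trans with (c * (c - 1) * (3 / (c * (c - 1)))); [right; field; lra |].
    apply Rmult_lt_compat_l; nra. }
  assert (Hlin : c / x * s < exp (c / x * s) - 1).
  { pose proof (exp_ineq1 (c / x * s)).
    assert (0 < c / x * s) by (apply Rmult_lt_0_compat; [apply Rdiv_lt_0_compat |]; lra).
    lra. }
  assert (Hratio : exp (c * s) * (c / x * s) = c * s * exp ((c - 1) * s)).
  { rewrite Hxs; replace (c * s) with ((c - 1) * s + s) at 1 by ring.
    rewrite exp_plus; field; apply Rgt_not_eq, exp_pos. }
  pose proof (exp_ineq1_le ((c - 1) * s)).
  pose proof (exp_pos (c * s)).
  apply Rlt_le_trans with (exp (c * s) * (c / x * s)); [| apply Rmult_le_compat_l; lra].
  rewrite Hratio.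
  assert (0 <= c * s * (exp ((c - 1) * s) - (1 + (c - 1) * s)))
    by (apply Rmult_le_pos; nra).
  assert (0 <= c * (c - 1) * s * (s - 1)) by (apply Rmult_le_pos; nra).
  nra.
Qed.

Lemma eventually_Rpower_div_sub1_le a c : 0 <= a -> 0 < c < 1 ->
  exists X, forall x, X <= x -> Rpower x c * (Rpower x (a * c / x) - 1) <= 2.
Proof.
  intros Ha Hc; set (d := 1 - c).
  assert (Hd : 0 < d) by (unfold d; lra).
  assert (Hk : 0 <= a * c) by nra.
  apply (eventually_of_ln _ (1 + 4 * (a * c) + 6 * (a * c) / (d * d))).
  intros x Hx Hs; unfold Rpower; set (s := ln x) in *.
  assert (Hxs : x = exp s) by (symmetry; apply exp_ln, Hx).
  assert (Hq : 0 <= 6 * (a * c) / (d * d))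
    by (apply Rmult_le_pos; [lra | left; apply Rinv_0_lt_compat; nra]).
  set (y := a * c / x * s).
  assert (Hy0 : 0 <= y).
  { apply Rmult_le_pos; [apply Rmult_le_pos; [lra | left; apply Rinv_0_lt_compat, Hx] | lra]. }
  assert (Hy1 : y <= 1).
  { pose proof (sqr_div4_lt_exp s ltac:(lra)) as Hsq.
    assert (Hyx : y * x = a * c * s) by (unfold y; field; lra).
    assert (0 <= (s - 4 * (a * c)) * s) by (apply Rmult_le_pos; lra).
    apply Rmult_le_reg_r with x; [exact Hx |]; rewrite Hyx, Hxs in *; lra. }
  (* exp (c s) / x = exp (-(d s)), and exp (d s) grows faster than (d s)^2 / 4 *)
  assert (Hratio : exp (c * s) * (3 * y) = 3 * (a * c) * s / exp (d * s)).
  { assert (Hsplit : x = exp (c * s) * exp (d * s))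
      by (rewrite <- exp_plus, Hxs; f_equal; unfold d; ring).
    unfold y; rewrite Hsplit; field; split; apply Rgt_not_eq, exp_pos. }
  assert (Hden : 6 * (a * c) <= d * d * s).
  { apply Rle_trans with (d * d * (6 * (a * c) / (d * d))); [right; field; lra |].
    apply Rmult_le_compat_l; nra. }
  pose proof (sqr_div4_lt_exp (d * s) ltac:(nra)) as Hsq.
  pose proof (exp_pos (d * s)); pose proof (exp_pos (c * s)).
  apply Rle_trans with (exp (c * s) * (3 * y));
    [apply Rmult_le_compat_l; [lra | apply exp_sub1_le_3mul; lra] |].
  rewrite Hratio; apply Rmult_le_reg_r with (exp (d * s)); [lra |].
  unfold Rdiv; rewrite Rmult_assoc, Rinv_l by lra; nra.
Qed.

Lemma pow_Rpower x y n : 0 < x -> Rpower x y ^ n = Rpower x (INR n * y).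
Proof.
  intros Hx; rewrite <- Rpower_pow by (unfold Rpower; apply exp_pos).
  rewrite Rpower_mult, Rmult_comm; reflexivity.
Qed.

Lemma Rpower_gt_1 x y : 1 < x -> 0 < y -> 1 < Rpower x y.
Proof. intros Hx Hy; rewrite <- (Rpower_O x) by lra; apply Rpower_lt; lra. Qed.

Lemma r_bounds g c1 c2 : 0 < c1 < 1 -> 1 < c2 ->
  exists N : nat, forall p : nat, (N <= p)%nat ->
    Rpower (INR p) (c1 / INR p) < r g p /\ r g p < Rpower (INR p) (c2 / INR p).
Proof.
  intros Hc1 Hc2.
  assert (Ha : 0 <= INR (2 * g + 1)) by apply pos_INR.
  destruct (eventually_Rpower_div_sub1_le _ _ Ha Hc1) as [X1 HX1].
  destruct (eventually_Rpower_div_sub1_gt _ Hc2) as [X2 HX2].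
  destruct (INR_unbounded (Rmax 1 (Rmax X1 X2))) as [N HN].
  exists N; intros p Hp.
  assert (Hx : Rmax 1 (Rmax X1 X2) < INR p) by (apply le_INR in Hp; lra).
  set (x := INR p) in *.
  pose proof (Rmax_l 1 (Rmax X1 X2)); pose proof (Rmax_r 1 (Rmax X1 X2)).
  pose proof (Rmax_l X1 X2); pose proof (Rmax_r X1 X2).
  assert (Ht1 : 1 < Rpower x (c1 / x)) by (apply Rpower_gt_1, Rdiv_lt_0_compat; lra).
  assert (Ht2 : 1 < Rpower x (c2 / x)) by (apply Rpower_gt_1, Rdiv_lt_0_compat; lra).
  assert (Hsmall : Rpower x (c1 / x) ^ p * (Rpower x (c1 / x) ^ (2 * g + 1) - 1) <= 2).
  { rewrite !pow_Rpower by lra; fold x.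
    replace (x * (c1 / x)) with c1 by (field; lra).
    replace (INR (2 * g + 1) * (c1 / x)) with (INR (2 * g + 1) * c1 / x) by (field; lra).
    apply HX1; lra. }
  assert (Hlarge : 3 < Rpower x (c2 / x) ^ p * (Rpower x (c2 / x) - 1)).
  { rewrite !pow_Rpower by lra; fold x.
    replace (x * (c2 / x)) with c2 by (field; lra).
    apply HX2; lra. }
  destruct (r_root g p _ Ht2 (B_pos g p _ Ht2 Hlarge)) as [Hr1 Hr0].
  split; [exact (B_root_gt g p _ _ Ht1 Hsmall Hr1 Hr0)
         | exact (B_root_lt g p _ _ Ht2 Hlarge Hr1 Hr0)].
Qed.

Lemma log_ratio_lt x y z : 1 < x -> 0 < y -> y < z ->
  x * ln y / ln x < x * ln z / ln x.
Proof.
  intros Hx Hy Hyz.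
  assert (0 < ln x) by (rewrite <- ln_1; apply ln_increasing; lra).
  apply Rmult_lt_compat_r; [apply Rinv_0_lt_compat; lra |].
  apply Rmult_lt_compat_l; [lra | apply ln_increasing; lra].
Qed.

Lemma log_ratio_Rpower x c : 1 < x -> x * ln (Rpower x (c / x)) / ln x = c.
Proof.
  intros Hx.
  assert (0 < ln x) by (rewrite <- ln_1; apply ln_increasing; lra).
  rewrite ln_Rpower; field; lra.
Qed.

Lemma is_lim_seq_log_ratio (u : nat -> R) :
  (forall c1 c2 : R, 0 < c1 < 1 -> 1 < c2 ->
     exists N : nat, forall p : nat, (N <= p)%nat ->
       Rpower (INR p) (c1 / INR p) < u p /\ u p < Rpower (INR p) (c2 / INR p)) ->
  is_lim_seq (fun p : nat => INR p * ln (u p) / ln (INR p)) 1.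
Proof.
  intros Hbounds; apply is_lim_seq_spec; intros eps.
  pose proof (cond_pos eps) as He.
  pose proof (Rmax_l (1 / 2) (1 - eps / 2)); pose proof (Rmax_r (1 / 2) (1 - eps / 2)).
  set (c1 := Rmax (1 / 2) (1 - eps / 2)) in *.
  assert (Hc1 : 0 < c1 < 1) by (split; [lra | apply Rmax_lub_lt; lra]).
  destruct (Hbounds c1 (1 + eps / 2) Hc1 ltac:(lra)) as [N HN].
  exists (max N 2); intros p Hp.
  destruct (HN p ltac:(lia)) as [Hlow Hup].
  assert (Hx : 1 < INR p) by (apply lt_1_INR; lia).
  assert (Hpow : 0 < Rpower (INR p) (c1 / INR p)) by (unfold Rpower; apply exp_pos).
  pose proof (log_ratio_lt _ _ _ Hx Hpow Hlow) as Hl.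
  assert (Hu : 0 < u p) by lra.
  pose proof (log_ratio_lt _ _ _ Hx Hu Hup) as Hr.
  rewrite log_ratio_Rpower in Hl, Hr by exact Hx.
  apply Rabs_def1; lra.
Qed.

Theorem lemma4p1 (g : nat) :
  (forall c1 c2 : R, 0 < c1 < 1 -> 1 < c2 ->
     exists N : nat, forall p : nat, (N <= p)%nat ->
       Rpower (INR p) (c1 / INR p) < r g p /\
       r g p < Rpower (INR p) (c2 / INR p))
  /\ is_lim_seq (fun p : nat => INR p * ln (r g p) / ln (INR p)) 1.
Proof.
  split; [exact (r_bounds g) |].
  exact (is_lim_seq_log_ratio _ (r_bounds g)).
Qed.
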